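(* Consider a uniform grid model. (i) For every $\theta\in(0,\pi/2)\cup(\pi/2,\pi)$ there exist $k\in\mathbb{N}$ and $c>0$ (possibly depending on the model and $\theta$) such that $\mathsf{LEI}_k(\theta,c)\neq\varnothing$. (ii) If the model is not vertically degenerate, the same holds for $\theta=\pi/2$. (iii) If the model is not horizontally degenerate, the same holds for $\theta=0$.
   Context: Fix an integer $L\ge2$; $\mathcal{D}_n$ is the set of closed squares obtained by dividing $[0,1]^2$ into an $L^n\times L^n$ grid. A grid model is a probability distribution $\mathfrak X$ on finite sets of distinct squares of $\mathcal{D}_1$ (random bounded number $\mathbf L$, $\mathbb{E}[\mathbf L]=L$). Random sets: $\mathcal{S}_0=\{[0,1]^2\}$; given $\mathcal{S}_n$, for each $R\in\mathcal{S}_n$ independently sample from $\mathfrak X$ and map the chosen squares into $R$ via the natural homothety; $\mathcal{S}_{n+1}$ is the resulting collection, $S_n=\bigcup\mathcal{S}_n$. Uniform: $\mathbb{P}[Q\in\mathcal{S}_1]=1/L$ for each $Q\in\mathcal{D}_1$. Vertically degenerate: a.s. $\mathcal{S}_1$ contains exactly one square in each column; horizontally degenerate: a.s. exactly one square in each row. Let $\Lambda=[L]^2$; for $\boldsymbol\lambda=((i_1,j_1),\dots,(i_n,j_n))\in\Lambda^n$, $Q(\boldsymbol\lambda)$ is the square of $\mathcal{D}_n$ with top-right corner $\sum_{m=1}^n(i_m,j_m)L^{-m}$. $\operatorname{proj}_\theta(x)=\langle x,(-\sin\theta,\cos\theta)\rangle$, $\ell(\theta,t)=\operatorname{proj}_\theta^{-1}(t)$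 (the line with direction $(\cos\theta,\sin\theta)$ through $t(-\sin\theta,\cos\theta)$); $|\cdot|$ is one-dimensional Lebesgue measure. For $\alpha\in\Lambda$, $\mathsf{LEI}_k(\theta,\alpha,c)$ is the set of $\boldsymbol\eta\in\{\alpha\}\times\Lambda^{k-1}$ such that for every $t$ with $\ell(\theta,t)\cap Q(\boldsymbol\eta)\neq\varnothing$, $\mathbb{E}\bigl[|\ell(\theta,t)\cap S_1\cap Q(\alpha)^c|\bigm| Q(\alpha)\in\mathcal{S}_1\bigr]\ge c/L$; $\mathsf{LEI}_k(\theta,c)=\bigcup_{\alpha\in\Lambda}\mathsf{LEI}_k(\theta,\alpha,c)$. *)

From HB Require Import structures.
From mathcomp Require Import all_boot all_order all_algebra.
From mathcomp Require Import all_classical all_reals all_analysis.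
Set Implicit Arguments. Unset Strict Implicit. Unset Printing Implicit Defensive.
Import Order.TTheory GRing.Theory Num.Theory.
Local Open Scope classical_set_scope.
Local Open Scope ring_scope.

Section GridDefs.
Variables (R : realType) (L : nat).

(* Lambda = [L]^2, digits taken 0-based: (i,j) with 0 <= i,j < L;
   i = column (x) index, j = row (y) index. *)
Definition Lam := ('I_L * 'I_L)%type.

(* x- and y-coordinates of the bottom-left corner of Q(lambda) *)
Fixpoint xcorner (s : seq Lam) : R :=
  match s with [::] => 0 | d :: s' => ((nat_of_ord d.1)%:R + xcorner s') / L%:R end.
Fixpoint ycorner (s : seq Lam) : R :=
  match s with [::] => 0 | d :: s' => ((nat_of_ord d.2)%:R + ycorner s') / L%:R end.

(* Q(lambda): the closed square of D_n (n = size lambda), nested in Q(lambda_1..lambda_{n-1}) *)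
Definition Qsq (s : seq Lam) : set (R * R) :=
  [set x | xcorner s <= x.1 <= xcorner s + L%:R ^- size s /\
           ycorner s <= x.2 <= ycorner s + L%:R ^- size s].

Definition S1 (A : {set Lam}) : set (R * R) :=
  [set x | exists b : Lam, b \in A /\ Qsq [:: b] x].

Definition proj (th : R) (x : R * R) : R := - x.1 * sin th + x.2 * cos th.
Definition ell (th t : R) : set (R * R) := [set x | proj th x = t].

(* arc-length parametrisation of ell(theta,t) *)
Definition lpar (th t s : R) : R * R :=
  (- t * sin th + s * cos th, t * cos th + s * sin th).

Definition line_len (th t : R) (X : set (R * R)) : \bar R :=
  lebesgue_measure [set s : R | X (lpar th t s)].

Definition grid_model (p : {set Lam} -> R) : Prop :=
  (forall A, 0 <= p A) /\ \sum_(A : {set Lam}) p A = 1 /\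
  \sum_(A : {set Lam}) p A * #|A|%:R = L%:R.

Definition prob_in (p : {set Lam} -> R) (a : Lam) : R :=
  \sum_(A : {set Lam} | a \in A) p A.

Definition uniform (p : {set Lam} -> R) : Prop :=
  forall a : Lam, prob_in p a = L%:R^-1.

Definition vert_degenerate (p : {set Lam} -> R) : Prop :=
  forall A, 0 < p A -> forall i : 'I_L, #|[set j : 'I_L | (i, j) \in A]| = 1%N.

Definition horiz_degenerate (p : {set Lam} -> R) : Prop :=
  forall A, 0 < p A -> forall j : 'I_L, #|[set i : 'I_L | (i, j) \in A]| = 1%N.

Definition cond_exp_len (p : {set Lam} -> R) (a : Lam) (th t : R) : \bar R :=
  ((\sum_(A : {set Lam} | a \in A)
      (p A)%:E * line_len th t (S1 A `&` ~` Qsq [:: a]))%E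
   * ((prob_in p a)^-1)%:E)%E.

Definition LEIa (p : {set Lam} -> R) (k : nat) (th : R) (a : Lam) (c : R)
  : set (seq Lam) :=
  [set eta | size eta = k /\ ohead eta = Some a /\
     forall t : R, ell th t `&` Qsq eta !=set0 ->
       ((c / L%:R)%:E <= cond_exp_len p a th t)%E].

Definition LEI (p : {set Lam} -> R) (k : nat) (th c : R) : set (seq Lam) :=
  \bigcup_(a in [set: Lam]) LEIa p k th a c.

End GridDefs.

From Pilot Require Import Defs.
From HB Require Import structures.
From mathcomp Require Import all_boot all_order all_algebra.
From mathcomp Require Import all_classical all_reals all_analysis.
From mathcomp Require Import ring lra.
Set Implicit Arguments. Unset Strict Implicit. Unset Printing Implicit Defensive.
Import Order.TTheory GRing.Theory Num.Theory.
Local Open Scope classical_set_scope.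
Local Open Scope ring_scope.

(* Suppose a realisation [A] of positive probability contains
   two distinct squares [a], [b] whose projections along [th] overlap in an
   open interval.  Then some point [Pa] of [Q(a)] and some point [Pb] in the
   interior of [Q(b)] have the same projection, and every line of direction
   [th] through a small enough subsquare [Q(eta)] of [Q(a)] around [Pa]
   passes close to [Pb], hence meets [Q(b) \ Q(a)] in a segment of length
   bounded below; weighting by [P(A)] gives [eta] in [LEI].
   Such a pair exists by counting, since [E #|S_1| = L]: if the projections
   of distinct squares of each realisation had disjoint interiors, every
   realisation would have at most [L] squares, and fewer whenever the square
   extremal for the projection is missing (for oblique [th], which by
   uniformity happens with probability [1 - 1/L]), or whenever some column
   (row) is empty (for [th = pi/2], resp. [th = 0], by non-degeneracy). *)

Section LineGeometry.
Variable R : realType.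
Implicit Types (th t sg e h : R) (x y C : R * R).

Definition along th x : R := x.1 * cos th + x.2 * sin th.

Definition box C e : set (R * R) :=
  [set x | `|x.1 - C.1| <= e /\ `|x.2 - C.2| <= e].

Definition open_box C e : set (R * R) :=
  [set x | `|x.1 - C.1| < e /\ `|x.2 - C.2| < e].

Lemma lpar_sub th t sg x :
  (lpar th t sg).1 - x.1 = - (t - Defs.proj th x) * sin th + (sg - along th x) * cos th /\
  (lpar th t sg).2 - x.2 = (t - Defs.proj th x) * cos th + (sg - along th x) * sin th.
Proof.
have sc := cos2Dsin2 th; rewrite /lpar /Defs.proj /along /=.
split; apply/eqP; rewrite -subr_eq0; apply/eqP;
  [transitivity (x.1 * (cos th ^+ 2 + sin th ^+ 2 - 1)) |
   transitivity (x.2 * (cos th ^+ 2 + sin th ^+ 2 - 1))];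
  by [ring | rewrite sc subrr mulr0].
Qed.

Lemma norm_lin_sincos th u v :
  `|u * sin th + v * cos th| <= `|u| + `|v|.
Proof.
rewrite (le_trans (ler_normD _ _)) // !normrM.
by rewrite lerD // ler_piMr // ?sin_max ?cos_max.
Qed.

Lemma lpar_near th t sg x d1 d2 :
  `|t - Defs.proj th x| <= d1 -> `|sg - along th x| <= d2 ->
  box x (d1 + d2) (lpar th t sg).
Proof.
move=> ht hs; have [e1 e2] := lpar_sub th t sg x.
split; rewrite ?e1 ?e2.
- by rewrite (le_trans (norm_lin_sincos _ _ _)) // normrN lerD.
- by rewrite addrC (le_trans (norm_lin_sincos _ _ _)) // addrC lerD.
Qed.

Lemma proj_sub_le th x y :
  `|Defs.proj th x - Defs.proj th y| <= `|x.1 - y.1| + `|x.2 - y.2|.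
Proof.
have -> : Defs.proj th x - Defs.proj th y =
  (- (x.1 - y.1)) * sin th + (x.2 - y.2) * cos th by rewrite /Defs.proj; ring.
by rewrite (le_trans (norm_lin_sincos _ _ _)) // normrN.
Qed.

Lemma sincos_norm_gt0 th : 0 < `|sin th| + `|cos th|.
Proof.
have sc := cos2Dsin2 th.
have s1 := sin_max th; have c1 := cos_max th.
have s2 : `|sin th| ^+ 2 = sin th ^+ 2 by rewrite real_normK ?num_real.
have c2 : `|cos th| ^+ 2 = cos th ^+ 2 by rewrite real_normK ?num_real.
have := normr_ge0 (sin th); have := normr_ge0 (cos th); nra.
Qed.

(* Shift the centres in opposite directions along [(-sg sin th, sg cos th)],
   along which the projection grows at the maximal rate [|sin th| + |cos th|]. *)
Lemma proj_meet_inner th h Ca Cb :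
  `|Defs.proj th Ca - Defs.proj th Cb| < h * (`|sin th| + `|cos th|) ->
  exists r Pa Pb, [/\ 0 < r, box Ca (h / 2 - r) Pa, box Cb (h / 2 - r) Pb &
                      Defs.proj th Pa = Defs.proj th Pb].
Proof.
set w := `|sin th| + `|cos th| => hD; have w0 : 0 < w := sincos_norm_gt0 th.
set k := (Defs.proj th Ca - Defs.proj th Cb) / (2 * w).
have hk : `|k| < h / 2.
  have w20 : 0 < 2 * w by rewrite mulr_gt0.
  by rewrite normrM normfV (gtr0_norm w20) ltr_pdivrMr //; lra.
pose v : R * R := (- Num.sg (sin th), Num.sg (cos th)).
have pv : Defs.proj th v = w by rewrite /Defs.proj /= opprK /w !normrEsg.
have kv1 : `|k * v.1| <= `|k|.
  by rewrite normrM normrN normr_sg ler_piMr //; case: (_ != 0).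
have kv2 : `|k * v.2| <= `|k|.
  by rewrite normrM normr_sg ler_piMr //; case: (_ != 0).
exists (h / 2 - `|k|), (Ca.1 - k * v.1, Ca.2 - k * v.2),
  (Cb.1 + k * v.1, Cb.2 + k * v.2).
have -> : h / 2 - (h / 2 - `|k|) = `|k| by ring.
split; first by lra.
- by split; rewrite /= addrAC subrr add0r normrN.
- by split; rewrite /= addrAC subrr add0r.
- apply/eqP; rewrite -subr_eq0; apply/eqP.
  transitivity (Defs.proj th Ca - Defs.proj th Cb - 2 * k * Defs.proj th v).
    by rewrite /Defs.proj /=; ring.
  by rewrite pv /k; field; rewrite gt_eqF.
Qed.

Lemma line_len_ge th t (X : set (R * R)) s0 d : 0 < d ->
  (forall sg, s0 <= sg <= s0 + d -> X (lpar th t sg)) ->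
  (d%:E <= line_len th t X)%E.
Proof.
move=> d0 segX; rewrite /line_len.
have sub : `[s0, s0 + d]%classic `<=` [set sg | X (lpar th t sg)].
  by move=> sg /=; rewrite in_itv /=; apply: segX.
apply: le_trans (le_outer_measure lebesgue_measure _ _ sub).
have := lebesgue_measure_itv `[s0, s0 + d].
rewrite /= lte_fin ltrDl d0 -EFinB addrAC subrr add0r => itvE.
by rewrite -[X in (X <= _)%E]itvE.
Qed.

End LineGeometry.

Lemma exists_expV_le (R : archiRealFieldType) (m : nat) (e : R) :
  (1 < m)%N -> 0 < e -> exists n, m%:R ^- n <= e.
Proof.
move=> m1 e0; set n := (Num.truncn e^-1).+1; exists n.
have pow_gt : n%:R < m%:R ^+ n :> R by rewrite -natrX ltr_nat ltn_expl.
have m0 : 0 < m%:R :> R by rewrite ltr0n (ltn_trans _ m1).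
rewrite -[X in _ <= X]invrK lef_pV2 ?posrE ?invr_gt0 ?exprn_gt0 //.
exact: ltW (lt_trans (truncnS_gt _) pow_gt).
Qed.

Lemma natr_near_eq (R : realFieldType) (m n : nat) : `|m%:R - n%:R : R| < 1 -> m = n.
Proof.
rewrite ltr_norml => /andP[h1 h2]; apply/eqP; rewrite eqn_leq.
by apply/andP; split; rewrite -ltnS -(ltr_nat R) -natr1; lra.
Qed.

Lemma truncn_eq_dist (R : archiRealFieldType) (x y : R) : 0 <= x -> 0 <= y ->
  Num.truncn x = Num.truncn y -> `|x - y| < 1.
Proof.
move=> x0 y0 exy; have /andP[x1 x2] := truncn_itv x0; have /andP[y1 y2] := truncn_itv y0.
rewrite exy -natr1 in x1 x2; rewrite -natr1 in y2.
by rewrite ltr_norml; apply/andP; split; lra.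
Qed.

Lemma cos_neq0_pi (R : realType) (th : R) : 0 < th < pi -> th != pi / 2 -> cos th != 0.
Proof.
move=> /andP[th0 thpi]; apply: contra => /eqP c0; apply/eqP.
have pi0 : (0 : R) < pi := pi_gt0 R.
apply: cos_inj; rewrite ?cos_pihalf // in_itv /=; apply/andP; split; lra.
Qed.

Section Cells.
Variables (R : realType) (L : nat).
Hypothesis L0 : (0 < L)%N.
Implicit Types (th : R) (x : R * R) (a b : Lam L) (e : seq (Lam L)).

Definition digit_pt a : R * R := ((a.1 : nat)%:R, (a.2 : nat)%:R).

Definition cell_center a : R * R :=
  (((a.1 : nat)%:R + 2^-1) / L%:R, ((a.2 : nat)%:R + 2^-1) / L%:R).

(* Scaled by [L], every cell of [D_1] projects onto a translate of one interval
   of length [|sin th| + |cos th|], so this says that the projections of the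
   cells [a] and [b] overlap in an open interval. *)
Definition proj_overlap th a b : Prop :=
  `|Defs.proj th (digit_pt a) - Defs.proj th (digit_pt b)| < `|sin th| + `|cos th|.

Let LR : (0 : R) < L%:R. Proof. by rewrite ltr0n. Qed.

Lemma Qsq_nilE x : Qsq (L := L) [::] x <-> 0 <= x.1 <= 1 /\ 0 <= x.2 <= 1.
Proof. by rewrite /Qsq /= expr0 invr1 add0r. Qed.

Lemma Qsq_consE b e x :
  Qsq (b :: e) x <-> Qsq e (L%:R * x.1 - (b.1 : nat)%:R, L%:R * x.2 - (b.2 : nat)%:R).
Proof.
have scale (u v z : R) : (u / L%:R <= z <= u / L%:R + v / L%:R) = (u <= L%:R * z <= u + v).
  by rewrite -mulrDl ler_pdivrMr // ler_pdivlMr // ![_ * L%:R]mulrC.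
rewrite /Qsq /= exprSr invfM !scale.
by split=> -[/andP[? ?] /andP[? ?]]; split; apply/andP; split; lra.
Qed.

Lemma digit_exists (y : R) : 0 <= y <= 1 -> exists d : 'I_L, 0 <= L%:R * y - d%:R <= 1.
Proof.
move=> /andP[y0 y1]; have Ly0 : 0 <= L%:R * y by rewrite mulr_ge0.
have /andP[t1 t2] := truncn_itv Ly0; rewrite -natr1 in t2.
case: (ltnP (Num.truncn (L%:R * y)) L) => hL.
  by exists (Ordinal hL); apply/andP; split; rewrite /=; lra.
have Lpred : (L.-1 < L)%N by rewrite prednK.
exists (Ordinal Lpred); rewrite /= -subn1 natrB // -(ler_nat R) in hL *.
have : L%:R * y <= L%:R by rewrite ler_piMr // ltW.
by move=> ?; apply/andP; split; lra.
Qed.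

Lemma Qsq_refine n x : Qsq (L := L) [::] x -> exists e, size e = n /\ Qsq e x.
Proof.
elim: n x => [|n IH] x hx; first by exists [::].
have [/digit_exists[d1 h1] /digit_exists[d2 h2]] := proj1 (Qsq_nilE x) hx.
have [e [se he]] := IH (_, _) (proj2 (Qsq_nilE (_, _)) (conj h1 h2)).
by exists ((d1, d2) :: e); split; [rewrite /= se | apply/Qsq_consE].
Qed.

Lemma Qsq_dist_le e x y : Qsq e x -> Qsq e y ->
  `|x.1 - y.1| + `|x.2 - y.2| <= 2 * L%:R ^- size e.
Proof.
move=> [/andP[x1 x1'] /andP[x2 x2']] [/andP[y1 y1'] /andP[y2 y2']].
have ? : `|x.1 - y.1| <= L%:R ^- size e by rewrite ler_norml; apply/andP; split; lra.
have ? : `|x.2 - y.2| <= L%:R ^- size e by rewrite ler_norml; apply/andP; split; lra.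
lra.
Qed.

Lemma Qsq_cellE b x : Qsq [:: b] x <-> box (cell_center b) (2 * L%:R)^-1 x.
Proof.
have near_center (k : nat) (z : R) :
    (0 <= L%:R * z - k%:R <= 1) = (`|z - (k%:R + 2^-1) / L%:R| <= (2 * L%:R)^-1).
  have -> : z - (k%:R + 2^-1) / L%:R = (L%:R * z - k%:R - 2^-1) / L%:R.
    by field; rewrite gt_eqF.
  rewrite invfM ler_norml -mulNr !ler_pM2r ?invr_gt0 //.
  by apply/idP/idP => /andP[? ?]; apply/andP; split; lra.
by rewrite Qsq_consE Qsq_nilE /box /= !near_center.
Qed.

Lemma open_cell_S1D (A : {set Lam L}) a b x : b \in A -> a != b ->
  open_box (cell_center b) (2 * L%:R)^-1 x -> (S1 A `&` ~` Qsq [:: a]) x.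
Proof.
move=> bA ab [xb1 xb2]; split.
  by exists b; split => //; apply/Qsq_cellE; split; exact: ltW.
move=> /Qsq_cellE[xa1 xa2]; move/negP: ab; apply.
have same_digit (i j : 'I_L) (z : R) : `|z - ((i : nat)%:R + 2^-1) / L%:R| <= (2 * L%:R)^-1 ->
    `|z - ((j : nat)%:R + 2^-1) / L%:R| < (2 * L%:R)^-1 -> i = j.
  move=> hi hj; apply/val_inj/(natr_near_eq (R := R)).
  have -> : (i : nat)%:R - (j : nat)%:R =
      L%:R * ((z - ((j : nat)%:R + 2^-1) / L%:R) - (z - ((i : nat)%:R + 2^-1) / L%:R)).
    by field; rewrite gt_eqF.
  rewrite normrM gtr0_norm // -ltr_pdivlMl // (le_lt_trans (ler_normB _ _)) //.
  by rewrite invfM in hi hj *; lra.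
rewrite [a]surjective_pairing [b]surjective_pairing.
by rewrite (same_digit _ _ _ xa1 xb1) (same_digit _ _ _ xa2 xb2).
Qed.

Lemma proj_cell_center_sub th a b :
  Defs.proj th (cell_center a) - Defs.proj th (cell_center b) =
  (Defs.proj th (digit_pt a) - Defs.proj th (digit_pt b)) / L%:R.
Proof. by rewrite /Defs.proj /=; field; rewrite gt_eqF. Qed.

Lemma Qsq_cons_refine a x (eps : R) : (1 < L)%N -> 0 < eps -> Qsq [:: a] x ->
  exists e, Qsq (a :: e) x /\ L%:R ^- size (a :: e) <= eps.
Proof.
move=> L1 eps0 /Qsq_consE xa; have [n hn] := exists_expV_le L1 eps0.
have [e [se he]] := Qsq_refine n xa.
exists e; split; first exact/Qsq_consE.
apply: le_trans hn; rewrite /= se exprSr invfM ler_piMr ?invr_ge0 ?exprn_ge0 //.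
by rewrite invf_le1 // ler1n.
Qed.

Lemma proj_digit_argmax th : 0 < sin th -> cos th != 0 ->
  exists bs, forall b,
    0 <= Defs.proj th (digit_pt bs) - Defs.proj th (digit_pt b)
      <= (L%:R - 1) * (sin th + `|cos th|) /\
    (b != bs -> 0 < Defs.proj th (digit_pt bs) - Defs.proj th (digit_pt b)).
Proof.
move=> s0 c0; have Lm1 : (L.-1 < L)%N by rewrite prednK.
pose lo := Ordinal L0; pose hi := Ordinal Lm1.
have LR1 : (L.-1)%:R = L%:R - 1 :> R by rewrite -subn1 natrB.
have i_le (i : 'I_L) : (i : nat)%:R <= L%:R - 1 :> R.
  by rewrite -LR1 ler_nat -ltnS prednK.
have i_ge1 (i : 'I_L) : i != lo -> 1 <= (i : nat)%:R :> R.
  by rewrite -val_eqE /= ler1n lt0n.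
have i_lt (i : 'I_L) : i != hi -> (i : nat)%:R <= L%:R - 2 :> R.
  rewrite -val_eqE /= => ne; have : (i < L.-1)%N by rewrite ltn_neqAle ne -ltnS prednK ?ltn_ord.
  by rewrite -(ler_nat R) LR1 -natr1 => ?; lra.
exists (lo, if 0 <= cos th then hi else lo) => -[b1 b2].
have := i_le b1; have := i_le b2; have b1_ge0 : 0 <= (b1 : nat)%:R :> R by [].
have b2_ge0 : 0 <= (b2 : nat)%:R :> R by [].
rewrite /digit_pt /Defs.proj /= xpair_eqE negb_and.
case: (lerP 0 (cos th)) => hc /=; [rewrite ger0_norm // | rewrite ltr0_norm //] => h2 h1.
- have {}hc : 0 < cos th by rewrite lt0r c0.
  by split; [apply/andP; split; nra | case/orP => [/i_ge1 | /i_lt] ?; nra].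
- by split; [apply/andP; split; nra | case/orP => /i_ge1 ?; nra].
Qed.

End Cells.

Arguments digit_pt {R L}.
Arguments cell_center {R L}.

Section GridModel.
Variables (R : realType) (L : nat) (p : {set Lam L} -> R).
Hypotheses (L1 : (1 < L)%N) (gm : grid_model p) (un : uniform p).
Implicit Types (th : R) (a b : Lam L) (A : {set Lam L}).

Let L0 : (0 < L)%N. Proof. exact: ltnW. Qed.
Let LR : (0 : R) < L%:R. Proof. by rewrite ltr0n. Qed.
Let p_ge0 A : 0 <= p A. Proof. by case: gm. Qed.
Let p_sum1 : \sum_A p A = 1. Proof. by case: gm => _ []. Qed.
Let p_meancard : \sum_A p A * #|A|%:R = L%:R. Proof. by case: gm => _ []. Qed.

Definition support_pair (P : Lam L -> Lam L -> Prop) : Prop :=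
  exists A a b, [/\ 0 < p A, a \in A, b \in A, a != b & P a b].

Lemma support_pairW (P Q : Lam L -> Lam L -> Prop) :
  (forall a b, P a b -> Q a b) -> support_pair P -> support_pair Q.
Proof. by move=> PQ [A [a [b [pA aA bA ab /PQ]]]]; exists A, a, b. Qed.

(* Since [E|S_1| = L], a map to ['I_L] that is injective on every realisation
   must be onto on almost every one. *)
Lemma collision_of_missed_value (f : Lam L -> 'I_L) A0 i0 :
  0 < p A0 -> i0 \notin f @: A0 -> support_pair (fun a b => f a = f b).
Proof.
move=> pA0 miss; apply: contrapT => no_coll.
have card_le A : 0 < p A -> #|A|%:R <= L%:R - (A == A0)%:R :> R.
  move=> pA; rewrite -natrB ?ler_nat; last exact: leq_trans (leq_b1 _) L0.
  have injf : {in A &, injective f}.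
    move=> a b aA bA fab; apply: contrapT => /eqP ab; apply: no_coll.
    by exists A, a, b.
  rewrite -(card_in_imset injf); case: eqP => [-> | _].
    have imC1 : (f @: A0 \subset [set~ i0])%SET.
      by apply/fintype.subsetP => i fi; rewrite !inE; apply: contraNneq miss => <-.
    by rewrite /= subn1 (leq_trans (subset_leq_card imC1)) // cardsC1 card_ord.
  by rewrite /= subn0 (leq_trans (max_card _)) // card_ord.
have : \sum_A p A * #|A|%:R <= \sum_A p A * (L%:R - (A == A0)%:R).
  apply: ler_sum => A _; have [pA0'|pA] := eqVneq (p A) 0; first by rewrite pA0' !mul0r.
  by rewrite ler_wpM2l // card_le // lt0r pA p_ge0.
under [X in _ <= X]eq_bigr do rewrite mulrBr.
rewrite p_meancard sumrB -big_distrl /= p_sum1 mul1r (bigD1 A0) //= eqxx mulr1.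
by rewrite big1 ?addr0 => [|B /negbTE->]; [lra | rewrite mulr0].
Qed.

Lemma exists_support_notin a : exists A, 0 < p A /\ a \notin A.
Proof.
apply: contrapT => all_in.
have : prob_in p a = 1.
  rewrite -p_sum1 (bigID (fun A => a \in A)) /= [X in _ + X]big1 ?addr0 // => A aA.
  apply/eqP; rewrite eq_le p_ge0 andbT leNgt; apply/negP => pA.
  by apply: all_in; exists A.
rewrite un => /eqP; rewrite invr_eq1 pnatr_eq1 => /eqP L_1.
by move: L1; rewrite L_1.
Qed.

Lemma pair_of_fiber_card_neq1 (f : Lam L -> 'I_L) A i : 0 < p A ->
  #|[set b in A | f b == i]| != 1%N -> support_pair (fun a b => f a = f b).
Proof.
move=> pA; rewrite neq_ltn ltnS leqn0 cards_eq0 => /orP[/eqP fib0 | ].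
  apply: (collision_of_missed_value (i0 := i) pA); apply/imsetP => -[b bA fbi].
  have : b \in [set b in A | f b == i] by rewrite inE bA fbi eqxx.
  by rewrite fib0 inE.
move=> /card_gt1P[a [b [aF bF ab]]]; rewrite !inE in aF bF.
case/andP: aF => aA /eqP fa; case/andP: bF => bA /eqP fb.
by exists A, a, b; split => //; rewrite fa fb.
Qed.

Lemma vert_pair : ~ vert_degenerate p -> support_pair (fun a b => a.1 = b.1).
Proof.
move=> nvd; apply: contrapT => nopair; apply: nvd => A pA i; apply/eqP.
apply: contraT => card_neq1; exfalso; apply: nopair.
apply: (pair_of_fiber_card_neq1 (f := fst) (i := i) pA).
have -> : [set b in A | b.1 == i] = pair i @: [set j | (i, j) \in A].
  apply/setP => -[i' j]; rewrite inE /=; apply/andP/imsetP.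
    by move=> [ijA /eqP ii]; subst i'; exists j; rewrite ?inE.
  by move=> [j' j'A [-> ->]]; rewrite inE in j'A.
by rewrite card_imset // => j j' [].
Qed.

Lemma horiz_pair : ~ horiz_degenerate p -> support_pair (fun a b => a.2 = b.2).
Proof.
move=> nhd; apply: contrapT => nopair; apply: nhd => A pA j; apply/eqP.
apply: contraT => card_neq1; exfalso; apply: nopair.
apply: (pair_of_fiber_card_neq1 (f := snd) (i := j) pA).
have -> : [set b in A | b.2 == j] = pair^~ j @: [set i | (i, j) \in A].
  apply/setP => -[i j']; rewrite inE /=; apply/andP/imsetP.
    by move=> [ijA /eqP jj]; subst j'; exists i; rewrite ?inE.
  by move=> [i' i'A [-> ->]]; rewrite inE in i'A.
by rewrite card_imset // => i i' [].
Qed.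

(* Rank the squares by how far their projection lies below the extremal
   square [bs]: the rank [truncn (x b)] lies in ['I_L], equals [L - 1] only
   at [bs], and squares of equal rank have overlapping projections. *)
Lemma diag_pair th : 0 < sin th -> cos th != 0 -> support_pair (proj_overlap th).
Proof.
move=> s0 c0; have [bs bs_max] := proj_digit_argmax L0 s0 c0.
pose g b := Defs.proj th (digit_pt b).
set w := sin th + `|cos th|; have w0 : 0 < w by rewrite ltr_pwDl.
pose x b := L%:R - 1 - (g bs - g b) / w.
have x_ge0 b : 0 <= x b.
  by have [/andP[_ ?] _] := bs_max b; rewrite subr_ge0 ler_pdivrMr.
have rank_lt b : (Num.truncn (x b) < L)%N.
  have [/andP[D0 _] _] := bs_max b; have : 0 <= (g bs - g b) / w by rewrite divr_ge0 // ltW.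
  by rewrite truncn_lt_nat // /x; lra.
pose rank b := Ordinal (rank_lt b).
have Lm1 : (L.-1 < L)%N by rewrite prednK.
have [A0 [pA0 bsA0]] := exists_support_notin bs.
have miss : Ordinal Lm1 \notin rank @: A0.
  apply/imsetP => -[b bA /(congr1 val) /= rank_top].
  have bbs : b != bs by apply: contraNneq bsA0 => <-.
  have : 0 < (g bs - g b) / w by rewrite divr_gt0 // (bs_max b).2.
  have /andP[+ _] := truncn_itv (x_ge0 b).
  by rewrite -rank_top -subn1 natrB // /x; lra.
apply: support_pairW (collision_of_missed_value pA0 miss) => a b /(congr1 val) /= eq_rank.
have := truncn_eq_dist (x_ge0 a) (x_ge0 b) eq_rank.
have -> : x a - x b = (g a - g b) / w by rewrite /x; field; rewrite gt_eqF.
by rewrite /proj_overlap (gtr0_norm s0) normrM normfV (gtr0_norm w0) ltr_pdivrMr // mul1r.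
Qed.

Lemma cond_exp_len_ge th t A0 a (d : R) : 0 < p A0 -> a \in A0 -> 0 <= d ->
  (d%:E <= line_len th t (S1 A0 `&` ~` Qsq [:: a]))%E ->
  ((p A0 * d * L%:R)%:E <= cond_exp_len p a th t)%E.
Proof.
move=> pA0 aA0 d0 len_ge.
have sum_ge : ((p A0 * d)%:E <=
    \sum_(A : {set Lam L} | a \in A) (p A)%:E * line_len th t (S1 A `&` ~` Qsq [:: a]))%E.
  rewrite (bigD1 A0) //=; apply: le_trans (leeDl _ _).
    by rewrite EFinM lee_pmul // lee_fin ltW.
  by apply: sume_ge0 => A _; rewrite mule_ge0 ?lee_fin.
rewrite /cond_exp_len un invrK EFinM; apply: lee_pmul => //.
by rewrite lee_fin mulr_ge0 // ltW.
Qed.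

Lemma LEI_of_overlap th :
  support_pair (proj_overlap th) -> exists k c, 0 < c /\ LEI p k th c !=set0.
Proof.
move=> [A0 [a [b [pA0 aA0 bA0 ab overlap]]]].
have half_cell : (2 * L%:R)^-1 = L%:R^-1 / 2 :> R by rewrite invfM mulrC.
have [r [Pa [Pb [r0 Pa_in Pb_in projP]]]] :
    exists r Pa Pb, [/\ 0 < r, box (cell_center a) (L%:R^-1 / 2 - r) Pa,
      box (cell_center b) (L%:R^-1 / 2 - r) Pb & Defs.proj th Pa = Defs.proj th Pb].
  apply: proj_meet_inner; rewrite (proj_cell_center_sub L0) normrM normfV (gtr0_norm LR).
  by rewrite mulrC ltr_pM2l ?invr_gt0.
have [e [Pa_e fine]] : exists e, Qsq (a :: e) Pa /\ L%:R ^- size (a :: e) <= r / 4.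
  apply: Qsq_cons_refine; rewrite ?divr_gt0 //.
  by apply/(Qsq_cellE L0); case: Pa_in; split; lra.
exists (size (a :: e)), (p A0 * (r / 4) * L%:R ^+ 2); split.
  by rewrite !mulr_gt0 ?divr_gt0 ?exprn_gt0.
exists (a :: e); exists a => //; split => //; split => // t [x [xt xQ]].
have t_near : `|t - Defs.proj th Pb| <= r / 2.
  rewrite -xt -projP (le_trans (proj_sub_le _ _ _)) //.
  by rewrite (le_trans (Qsq_dist_le xQ Pa_e)) //; lra.
(* The line passes within [r / 2] of [Pb], so a segment of length [r / 4] of it
   stays within [3 r / 4] of [Pb], inside the open cell of [b]. *)
have segment sg : along th Pb <= sg <= along th Pb + r / 4 ->
    (S1 A0 `&` ~` Qsq [:: a]) (lpar th t sg).
  move=> /andP[sg1 sg2]; apply: (open_cell_S1D L0 bA0 ab).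
  have sg_near : `|sg - along th Pb| <= r / 4 by rewrite ger0_norm ?subr_ge0; lra.
  have [l1 l2] := lpar_near t_near sg_near; case: Pb_in => b1 b2.
  rewrite half_cell; split.
  - by apply: le_lt_trans (ler_distD Pb.1 _ _) _; lra.
  - by apply: le_lt_trans (ler_distD Pb.2 _ _) _; lra.
have := cond_exp_len_ge pA0 aA0 (ltW (divr_gt0 r0 _)) (line_len_ge (divr_gt0 r0 _) segment).
by rewrite expr2 mulrA mulfK ?gt_eqF //; apply.
Qed.

End GridModel.

Theorem lemma4p10 (R : realType) (L : nat) (p : {set Lam L} -> R) :
  (2 <= L)%N -> grid_model p -> uniform p ->
  (forall th : R, 0 < th < pi -> th != pi / 2 ->
     exists (k : nat) (c : R), 0 < c /\ LEI p k th c !=set0) /\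
  (~ vert_degenerate p ->
     exists (k : nat) (c : R), 0 < c /\ LEI p k (pi / 2) c !=set0) /\
  (~ horiz_degenerate p ->
     exists (k : nat) (c : R), 0 < c /\ LEI p k 0 c !=set0).
Proof.
move=> L2 gm un; split; [|split].
- move=> th th_pi th_half; apply: (LEI_of_overlap L2 gm un).
  exact: (diag_pair L2 gm un (sin_gt0_pi th_pi) (cos_neq0_pi th_pi th_half)).
- move=> nvd; apply: (LEI_of_overlap L2 gm un).
  apply: support_pairW (vert_pair L2 gm nvd) => a b eq1.
  rewrite /proj_overlap /Defs.proj sin_pihalf cos_pihalf /= eq1 !mulr0 subrr.
  by rewrite !normr0 normr1 addr0 ltr01.
- move=> nhd; apply: (LEI_of_overlap L2 gm un).
  apply: support_pairW (horiz_pair L2 gm nhd) => a b eq2.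
  rewrite /proj_overlap /Defs.proj sin0 cos0 /= eq2 !mulr0 subrr.
  by rewrite !normr0 normr1 add0r ltr01.
Qed.
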